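(* Let $p>q\ge 0$ be integers and let $P$, $Q$ be orthogonal projections on an $N$-dimensional real inner product space with ranks $p$ and $q$ respectively. Then there exist orthogonal projections $P'$ and $Q'$ of ranks $p-1$ and $q+1$ respectively such that $P+Q=P'+Q'$. *)

From HB Require Import structures.
From mathcomp Require Import all_boot all_order all_algebra.
From mathcomp Require Import reals.
Set Implicit Arguments. Unset Strict Implicit. Unset Printing Implicit Defensive.
Import Order.TTheory GRing.Theory Num.Theory.
Local Open Scope ring_scope.

(* An N-dimensional real inner product space is modelled (up to isometry) as
   R^N with the standard inner product, so linear operators are N x N real
   matrices and the adjoint is the transpose. *)
Definition orth_proj (R : realType) (N : nat) (P : 'M[R]_N) : Prop :=
  P *m P = P /\ P^T = P.

From HB Require Import structures.
From mathcomp Require Import all_boot all_order all_algebra.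
From mathcomp Require Import reals.
From mathcomp Require Import zify.
Set Implicit Arguments. Unset Strict Implicit. Unset Printing Implicit Defensive.
Import Order.TTheory GRing.Theory Num.Theory.
Local Open Scope ring_scope.

(* Dimension counting gives a nonzero vector v in the range of P and the kernel
   of Q.  With E the orthogonal projection onto the line spanned by v, E is
   a subprojection of P and orthogonal to Q, so P' := P - E and Q' := Q + E
   are orthogonal projections whose ranks are p - 1 and q + 1. *)

Section IdempotentMatrices.
Variables (F : fieldType) (n : nat).
Implicit Types (A B E : 'M[F]_n).

Lemma sub_idem_mulmx m A (X : 'M[F]_(m, n)) :
  A *m A = A -> (X <= A)%MS -> X *m A = X.
Proof. by move=> AA /submxP[D ->]; rewrite -mulmxA AA. Qed.

Lemma trmx_mul_sym A B : A^T = A -> B^T = B -> (A *m B)^T = B *m A.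
Proof. by move=> At Bt; rewrite trmx_mul At Bt. Qed.

Lemma idem_subr A E :
  A *m A = A -> E *m E = E -> A *m E = E -> E *m A = E ->
  (A - E) *m (A - E) = A - E.
Proof. by move=> AA EE AE EA; rewrite mulmxBl !mulmxBr AA AE EA EE subrr subr0. Qed.

Lemma idem_addr A E :
  A *m A = A -> E *m E = E -> A *m E = 0 -> E *m A = 0 ->
  (A + E) *m (A + E) = A + E.
Proof. by move=> AA EE AE EA; rewrite mulmxDl !mulmxDr AA AE EA EE add0r addr0. Qed.

Lemma mxrank_add_idem A B :
  A *m A = A -> B *m B = B -> A *m B = 0 -> B *m A = 0 ->
  \rank (A + B)%R = (\rank A + \rank B)%N.
Proof.
move=> AA BB AB BA.
have eA : A *m (A + B) = A by rewrite mulmxDr AA AB addr0.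
have eB : B *m (A + B) = B by rewrite mulmxDr BB BA add0r.
have sA : (A <= (A + B)%R)%MS by rewrite -{1}eA submxMl.
have sB : (B <= (A + B)%R)%MS by rewrite -{1}eB submxMl.
have -> : \rank (A + B)%R = \rank (A + B)%MS.
  apply/eqP; rewrite eqn_leq !mxrankS ?addmx_sub_adds //.
  by rewrite addsmx_sub sA sB.
suff cap0 : (A :&: B)%MS = 0 by rewrite -mxrank_sum_cap cap0 mxrank0 addn0.
have capA := sub_idem_mulmx AA (capmxSl A B).
by have [D eD] := submxP (capmxSr A B); rewrite -capA eD -mulmxA BA mulmx0.
Qed.

Lemma mxrank_sub_idem A E :
  A *m A = A -> E *m E = E -> A *m E = E -> E *m A = E ->
  \rank (A - E) = (\rank A - \rank E)%N.
Proof.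
move=> AA EE AE EA.
have rAE := mxrank_add_idem (idem_subr AA EE AE EA) EE.
rewrite subrK in rAE; rewrite rAE ?addnK //.
  by rewrite mulmxBl AE EE subrr.
by rewrite mulmxBr EA EE subrr.
Qed.

Lemma exists_nz_row_sub_ker A B :
  (\rank B < \rank A)%N ->
  exists u : 'rV[F]_n, [/\ u != 0, (u <= A)%MS & u *m B = 0].
Proof.
move=> rBA.
have cap_gt0 : (0 < \rank (A :&: kermx B))%N.
  have := mxrank_sum_cap A (kermx B); rewrite mxrank_ker.
  have := rank_leq_col (A + kermx B)%MS; have := rank_leq_col B; lia.
exists (nz_row (A :&: kermx B)%MS); split.
- by rewrite nz_row_eq0 -mxrank_eq0 -lt0n.
- exact: submx_trans (nz_row_sub _) (capmxSl _ _).
- by apply/sub_kermxP; exact: submx_trans (nz_row_sub _) (capmxSr _ _).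
Qed.

End IdempotentMatrices.

Section RankOneProjection.
Variables (R : realFieldType) (n : nat).
Implicit Types (A : 'M[R]_n) (v : 'rV[R]_n).

Lemma mulmx_trmx_self_eq0 v : (v *m v^T == 0) = (v == 0).
Proof.
apply/eqP/eqP => [vv0|->]; last by rewrite mul0mx.
apply/rowP => j; rewrite mxE.
have : \sum_(k < n) v 0 k * v 0 k = (v *m v^T) 0 0.
  by rewrite mxE; apply: eq_bigr => k _; rewrite mxE.
rewrite vv0 mxE.
move/psumr_eq0P => /(_ (fun k _ => sqr_ge0 (v 0 k)) j isT) /eqP.
by rewrite mulf_eq0 orbb => /eqP.
Qed.

(* v^T v / |v|^2, the projection onto the line spanned by v; it is 0 when
   v = 0. *)
Definition rank1_proj v : 'M[R]_n := ((v *m v^T) 0 0)^-1 *: (v^T *m v).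

Lemma rank1_proj_tr v : (rank1_proj v)^T = rank1_proj v.
Proof. by rewrite /rank1_proj linearZ /= trmx_mul trmxK. Qed.

Lemma rank1_projMr A v a :
  v *m A = a *: v -> rank1_proj v *m A = a *: rank1_proj v.
Proof. by move=> vA; rewrite -scalemxAl -mulmxA vA -scalemxAr scalerA mulrC -scalerA. Qed.

Lemma rank1_proj_fixed v : v != 0 -> v *m rank1_proj v = v.
Proof.
rewrite -mulmx_trmx_self_eq0 /rank1_proj => vv_nz.
set s := (v *m v^T) 0 0.
have svv : v *m v^T = s%:M by rewrite [LHS]mx11_scalar.
have s_nz : s != 0 by apply: contra vv_nz => /eqP s0; rewrite svv s0 raddf0.
by rewrite -scalemxAr mulmxA svv mul_scalar_mx scalerA mulVf ?scale1r.
Qed.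

Lemma rank1_proj_idem v : v != 0 -> rank1_proj v *m rank1_proj v = rank1_proj v.
Proof.
move=> v_nz; have vE : v *m rank1_proj v = 1 *: v by rewrite scale1r rank1_proj_fixed.
by rewrite (rank1_projMr vE) scale1r.
Qed.

Lemma rank1_proj_rank v : v != 0 -> \rank (rank1_proj v) = 1%N.
Proof.
move=> v_nz; apply/eqP; rewrite eqn_leq; apply/andP; split.
  exact: leq_trans (mxrank_scale _ _) (leq_trans (mxrankM_maxr _ _) (rank_leq_row v)).
have vE := rank1_proj_fixed v_nz.
by rewrite lt0n mxrank_eq0; apply: contra v_nz => /eqP E0; rewrite -vE E0 mulmx0.
Qed.

End RankOneProjection.

Section OrthogonalProjections.
Variables (R : realType) (n : nat).
Implicit Types (E P Q : 'M[R]_n).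

Lemma orth_proj_rank1 (v : 'rV[R]_n) : v != 0 -> orth_proj (rank1_proj v).
Proof. by move=> v_nz; split; [exact: rank1_proj_idem | exact: rank1_proj_tr]. Qed.

Lemma orth_proj_subr P E :
  orth_proj P -> orth_proj E -> P *m E = E -> E *m P = E -> orth_proj (P - E).
Proof.
by move=> [PP Pt] [EE Et] PE EP; split; [exact: idem_subr | rewrite raddfB /= Pt Et].
Qed.

Lemma orth_proj_addr Q E :
  orth_proj Q -> orth_proj E -> Q *m E = 0 -> E *m Q = 0 -> orth_proj (Q + E).
Proof.
by move=> [QQ Qt] [EE Et] QE EQ; split; [exact: idem_addr | rewrite raddfD /= Qt Et].
Qed.

End OrthogonalProjections.

Theorem lemma2p4 (R : realType) (N p q : nat) (P Q : 'M[R]_N) :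
  (q < p)%N ->
  orth_proj P -> \rank P = p ->
  orth_proj Q -> \rank Q = q ->
  exists P' Q' : 'M[R]_N,
    [/\ orth_proj P', \rank P' = p.-1, orth_proj Q', \rank Q' = q.+1
      & P + Q = P' + Q'].
Proof.
move=> qp oP rP oQ rQ; have [[PP Pt] [QQ Qt]] := (oP, oQ).
have rQP : (\rank Q < \rank P)%N by rewrite rP rQ.
have [v [v_nz vP vQ]] := exists_nz_row_sub_ker rQP.
pose E := rank1_proj v.
have oE : orth_proj E := orth_proj_rank1 v_nz.
have [EE Et] := oE.
have EP : E *m P = E.
  have vP1 : v *m P = 1 *: v by rewrite scale1r sub_idem_mulmx.
  by rewrite /E (rank1_projMr vP1) scale1r.
have EQ : E *m Q = 0.
  have vQ0 : v *m Q = 0 *: v by rewrite scale0r.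
  by rewrite /E (rank1_projMr vQ0) scale0r.
have PE : P *m E = E by rewrite -[LHS]trmxK trmx_mul_sym // EP Et.
have QE : Q *m E = 0 by rewrite -[LHS]trmxK trmx_mul_sym // EQ trmx0.
exists (P - E), (Q + E); split.
- exact: orth_proj_subr.
- by rewrite mxrank_sub_idem // rP rank1_proj_rank // subn1.
- exact: orth_proj_addr.
- by rewrite mxrank_add_idem // rQ rank1_proj_rank // addn1.
- by rewrite addrCA subrK addrC.
Qed.
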